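(* Let $\langle\nabla_1,t_1\rangle$ and $\langle\nabla_2,t_2\rangle$ be terms-in-context such that $t_1,\nabla_1$ and $t_2,\nabla_2$ have disjoint sets of variables. Then $\langle\nabla_1,t_1\rangle$ and $\langle\nabla_2,t_2\rangle$ are joinable, i.e. there exists a term-in-context $\langle\Gamma,s\rangle$ with $\langle\nabla_1,t_1\rangle\preceq\langle\Gamma,s\rangle$ and $\langle\nabla_2,t_2\rangle\preceq\langle\Gamma,s\rangle$, if and only if the nominal unification problem $\{t_1\approx^? t_2\}\cup\nabla_1\cup\nabla_2$ has a solution, i.e. there exist a freshness context $\Gamma$ and a substitution $\sigma$ with $\Gamma\vdash t_1\sigma\approx t_2\sigma$ and $\Gamma\vdash a\# X\sigma$ for every $a\# X\in\nabla_1\cup\nabla_2$.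
   Context: Nominal terms $t::=f(t_1,\dots,t_n)\mid a\mid a.t\mid \pi\cdot X$ over sorted atoms $a,b,\dots$, variables $X,Y,\dots$ and function symbols; $\pi$ ranges over permutations (finite sequences of swappings $(a\,b)$ of same-sorted atoms, inverse = reversed sequence), $\pi\bullet t$ is the swapping action ($(a\,b)$ exchanges $a$ and $b$ everywhere and $(a\,b)\bullet(\pi\cdot X)=((a\,b)\pi)\cdot X$). Substitutions $\sigma$ map variables to terms of the same sort; application $t\sigma$ allows atom capture and $(\pi\cdot X)\sigma=\pi\bullet(X\sigma)$. A freshness context is a finite set of constraints $a\# X$. Judgments: $\nabla\vdash a\approx a$; $\nabla\vdash a.t\approx a.t'$ if $\nabla\vdash t\approx t'$; $\nabla\vdash a.t\approx a'.t'$ if $a\neq a'$, $\nabla\vdash t\approx(a\,a')\bullet t'$ and $\nabla\vdash a\# t'$; $\nabla\vdash\pi\cdot X\approx\pi'\cdot X$ if $a\# X\in\nabla$ for all $a$ with $\pi\bullet a\neq\pi'\bullet a$; $\nabla\vdash f(t_1,..,t_n)\approx f(t'_1,..,t'_n)$ if $\nabla\vdash t_i\approx t'_i$ for all $i$; $\nabla\vdash a\# a'$ if $a\ne a'$; $\nabla\vdash a\#\pi\cdot X$ if $\pi^{-1}\bullet a\# X\in\nabla$; $\nabla\vdash a\# f(t_1,..,t_n)$ if $\nabla\vdash a\# t_i$ for all $i$; $\nabla\vdash a\# a.t$; $\nabla\vdash a\# a'.t$ if $a\ne a'$ and $\nabla\vdash a\# t$. The algorithm ${\sf FC}$ on a finite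 set $F$ of formulas $a\# t$: starting from $F;\emptyset$, apply as long as possible: $\{a\# b\}\uplus F';\Delta\Rightarrow F';\Delta$ if $a\neq b$; $\{a\# a.t\}\uplus F';\Delta\Rightarrow F';\Delta$; $\{a\# b.t\}\uplus F';\Delta\Rightarrow\{a\# t\}\cup F';\Delta$ if $a\neq b$; $\{a\# f(t_1,\dots,t_n)\}\uplus F';\Delta\Rightarrow \{a\# t_1,\dots,a\# t_n\}\cup F';\Delta$; $\{a\#\pi\cdot X\}\uplus F';\Delta\Rightarrow F';\{\pi^{-1}\bullet a\# X\}\cup\Delta$; the result is $\Delta$ if the terminal state is $\emptyset;\Delta$ and $\bot$ if it contains some $a\# a$. $\nabla\sigma:={\sf FC}(\{a\# X\sigma\mid a\# X\in\nabla\})$. $\sigma$ respects $\nabla$ if for every $X$, no atom $a$ with $a\# X\in\nabla$ occurs free in $X\sigma$ outside of suspensions. A term-in-context is a pair $\langle\nabla,t\rangle$; $\langle\nabla_1,t_1\rangle\preceq\langle\nabla_2,t_2\rangle$ if there is a substitution $\sigma$ respecting $\nabla_1$ with $\nabla_1\sigma\subseteq\nabla_2$ and $\nabla_2\vdash t_1\sigma\approx t_2$. *)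

From Stdlib Require Import List Arith Bool.
Import ListNotations.

(* atom sorts (SAtm n), base data sorts (SBase n), abstraction sorts [nu]tau *)
Inductive sort : Type :=
| SAtm  : nat -> sort
| SBase : nat -> sort
| SAbs  : nat -> sort -> sort.

(* An atom is a pair (atom sort, name); a variable is a pair (sort, name). *)
Definition atom : Type := (nat * nat)%type.
Definition asort (a : atom) : nat := fst a.
Definition var : Type := (sort * nat)%type.
Definition vsort (X : var) : sort := fst X.
Definition fsym : Type := nat.

Definition atom_eqb (a b : atom) : bool :=
  Nat.eqb (fst a) (fst b) && Nat.eqb (snd a) (snd b).

Definition perm : Type := list (atom * atom).

Definition swap_atom (s : atom * atom) (c : atom) : atom :=
  if atom_eqb c (fst s) then snd s else if atom_eqb c (snd s) then fst s else c.

(* [s1; ...; sn] acts as s1 o ... o sn *)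
Definition perm_app (p : perm) (c : atom) : atom := fold_right swap_atom c p.
Definition perm_inv (p : perm) : perm := rev p.

Definition wf_perm (p : perm) : Prop :=
  forall s, In s p -> asort (fst s) = asort (snd s).

Inductive term : Type :=
| Atm  : atom -> term
| Abs  : atom -> term -> term
| Fn   : fsym -> list term -> term
| Susp : perm -> var -> term.

Fixpoint perm_act (p : perm) (t : term) : term :=
  match t with
  | Atm a => Atm (perm_app p a)
  | Abs a u => Abs (perm_app p a) (perm_act p u)
  | Fn f ts => Fn f (map (perm_act p) ts)
  | Susp q X => Susp (p ++ q) X
  end.

(* substitution application (atom capture allowed), (pi.X)sigma = pi•(X sigma) *)
Definition subst_t : Type := var -> term.

Fixpoint subst (sg : subst_t) (t : term) : term :=
  match t with
  | Atm a => Atm a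
  | Abs a u => Abs a (subst sg u)
  | Fn f ts => Fn f (map (subst sg) ts)
  | Susp p X => perm_act p (sg X)
  end.

(* X sigma, where the variable X as a term is id.X *)
Definition vsub (sg : subst_t) (X : var) : term := subst sg (Susp nil X).

Definition signature : Type := fsym -> list sort * sort.

Inductive has_sort (sig : signature) : term -> sort -> Prop :=
| hs_atm : forall a, has_sort sig (Atm a) (SAtm (asort a))
| hs_abs : forall a t s, has_sort sig t s -> has_sort sig (Abs a t) (SAbs (asort a) s)
| hs_fn  : forall f ts, Forall2 (has_sort sig) ts (fst (sig f)) ->
           has_sort sig (Fn f ts) (snd (sig f))
| hs_susp : forall p X, wf_perm p -> has_sort sig (Susp p X) (vsort X).

Definition wf_subst (sig : signature) (sg : subst_t) : Prop :=
  forall X, has_sort sig (sg X) (vsort X).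

(* a finite set of constraints a # X, represented as a list *)
Definition fctx : Type := list (atom * var).

Inductive fresh (G : fctx) : atom -> term -> Prop :=
| fr_atm : forall a a', a <> a' -> fresh G a (Atm a')
| fr_susp : forall a p X, In (perm_app (perm_inv p) a, X) G -> fresh G a (Susp p X)
| fr_fn : forall a f ts, (forall t, In t ts -> fresh G a t) -> fresh G a (Fn f ts)
| fr_abs_eq : forall a t, fresh G a (Abs a t)
| fr_abs_neq : forall a a' t, a <> a' -> fresh G a t -> fresh G a (Abs a' t).

Inductive aeq (G : fctx) : term -> term -> Prop :=
| aeq_atm : forall a, aeq G (Atm a) (Atm a)
| aeq_abs_eq : forall a t t', aeq G t t' -> aeq G (Abs a t) (Abs a t')
| aeq_abs_neq : forall a a' t t', a <> a' -> asort a = asort a' ->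
    aeq G t (perm_act [(a, a')] t') -> fresh G a t' -> aeq G (Abs a t) (Abs a' t')
| aeq_susp : forall p p' X,
    (forall c, perm_app p c <> perm_app p' c -> In (c, X) G) ->
    aeq G (Susp p X) (Susp p' X)
| aeq_fn : forall f ts ts', Forall2 (aeq G) ts ts' -> aeq G (Fn f ts) (Fn f ts').

(* FC on {a # t}: None = bottom, Some D = the resulting context. *)
Fixpoint fc (a : atom) (t : term) : option fctx :=
  match t with
  | Atm b => if atom_eqb a b then None else Some nil
  | Abs b u => if atom_eqb a b then Some nil else fc a u
  | Fn _ ts =>
      fold_right (fun u acc =>
        match fc a u, acc with
        | Some D1, Some D2 => Some (D1 ++ D2)
        | _, _ => None
        end) (Some nil) ts
  | Susp p X => Some [(perm_app (perm_inv p) a, X)]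
  end.

(* nabla sigma := FC({a # X sigma | a # X in nabla}) *)
Fixpoint nabla_sub (N : fctx) (sg : subst_t) : option fctx :=
  match N with
  | nil => Some nil
  | (a, X) :: N' =>
      match fc a (vsub sg X), nabla_sub N' sg with
      | Some D1, Some D2 => Some (D1 ++ D2)
      | _, _ => None
      end
  end.

Fixpoint occurs_free_unsusp (a : atom) (t : term) : bool :=
  match t with
  | Atm b => atom_eqb a b
  | Abs b u => negb (atom_eqb a b) && occurs_free_unsusp a u
  | Fn _ ts => existsb (occurs_free_unsusp a) ts
  | Susp _ _ => false
  end.

Definition respects (sg : subst_t) (N : fctx) : Prop :=
  forall a X, In (a, X) N -> occurs_free_unsusp a (vsub sg X) = false.

Definition tic : Type := (fctx * term)%type.

Definition tic_le (sig : signature) (c1 c2 : tic) : Prop :=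
  exists sg : subst_t,
    wf_subst sig sg /\ respects sg (fst c1) /\
    (exists D, nabla_sub (fst c1) sg = Some D /\ incl D (fst c2)) /\
    aeq (fst c2) (subst sg (snd c1)) (snd c2).

Fixpoint vars (t : term) : list var :=
  match t with
  | Atm _ => nil
  | Abs _ u => vars u
  | Fn _ ts => flat_map vars ts
  | Susp _ X => [X]
  end.

Definition vars_tic (c : tic) : list var := vars (snd c) ++ map snd (fst c).

From Stdlib Require Import List PeanoNat.
Import ListNotations.

(* A solution (G, sg) of the unification problem gives the common instance
   <G, t2 sg>: the constraints G |- a # X sg say exactly that FC(Ni sg) is
   contained in G, and they force sg to respect Ni.  Conversely, from
   witnesses sg1, sg2 of <Ni, ti> <= <G, s>, glue the substitution acting as
   sg1 on the variables of <N1, t1> and as sg2 elsewhere; by disjointness it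
   sends ti to ti sgi, so t1 sg ~ s ~ t2 sg under G.  This needs ~ to be an
   equivalence relation, proved in the usual way: equivariance, the
   disagreement-set lemma (p . t ~ p' . t when every atom on which p and p'
   differ is fresh for t) and preservation of freshness under ~; symmetry and
   transitivity then follow by structural induction. *)

Section Forall2_lemmas.

Context {A B C : Type}.

Lemma Forall2_map_l (R : C -> B -> Prop) (f : A -> C) xs ys :
  Forall2 R (map f xs) ys <-> Forall2 (fun x y => R (f x) y) xs ys.
Proof.
  revert ys; induction xs as [|x xs IH]; intros [|y ys]; simpl; split; intro H;
    inversion H; subst; constructor; auto; apply IH; auto.
Qed.

Lemma Forall2_map_r (R : A -> C -> Prop) (f : B -> C) xs ys :
  Forall2 R xs (map f ys) <-> Forall2 (fun x y => R x (f y)) xs ys.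
Proof.
  revert xs; induction ys as [|y ys IH]; intros [|x xs]; simpl; split; intro H;
    inversion H; subst; constructor; auto; apply IH; auto.
Qed.

Lemma Forall2_Forall_impl_l (P : A -> Prop) (R R' : A -> B -> Prop) xs ys :
  (forall x y, P x -> R x y -> R' x y) ->
  Forall P xs -> Forall2 R xs ys -> Forall2 R' xs ys.
Proof. intros Hi HP H; induction H; inversion HP; subst; constructor; auto. Qed.

Lemma Forall2_Forall_impl_r (P : B -> Prop) (R R' : A -> B -> Prop) xs ys :
  (forall x y, P y -> R x y -> R' x y) ->
  Forall P ys -> Forall2 R xs ys -> Forall2 R' xs ys.
Proof. intros Hi HP H; induction H; inversion HP; subst; constructor; auto. Qed.

Lemma Forall2_diag (P : A -> Prop) (R : A -> A -> Prop) xs :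
  (forall x, P x -> R x x) -> Forall P xs -> Forall2 R xs xs.
Proof. intros Hi HP; induction HP; constructor; auto. Qed.

Lemma Forall2_Forall_transport (P : A -> Prop) (Q : B -> Prop) (R : A -> B -> Prop) xs ys :
  (forall x y, P x -> R x y -> Q y) -> Forall P xs -> Forall2 R xs ys -> Forall Q ys.
Proof. intros Hi HP H; induction H; inversion HP; subst; constructor; eauto. Qed.

Lemma Forall2_Forall_trans (P : A -> Prop) (R : A -> B -> Prop) (S : B -> C -> Prop)
  (T : A -> C -> Prop) xs ys zs :
  (forall x y z, P x -> R x y -> S y z -> T x z) ->
  Forall P xs -> Forall2 R xs ys -> Forall2 S ys zs -> Forall2 T xs zs.
Proof.
  intros Hi HP H; revert zs; induction H; intros zs HS;
    inversion HP; inversion HS; subst; constructor; eauto.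
Qed.

End Forall2_lemmas.

(** * Permutations *)

Lemma atom_eqb_spec (a b : atom) : reflect (a = b) (atom_eqb a b).
Proof.
  destruct a as [x y], b as [u v]; unfold atom_eqb; simpl.
  destruct (Nat.eqb_spec x u), (Nat.eqb_spec y v); constructor; congruence.
Qed.

Definition atom_dec (a b : atom) : {a = b} + {a <> b}.
Proof. repeat decide equality. Defined.

Ltac case_atom_eqb :=
  repeat match goal with
         | |- context [atom_eqb ?x ?y] => destruct (atom_eqb_spec x y)
         | H : context [atom_eqb ?x ?y] |- _ => destruct (atom_eqb_spec x y)
         end; subst; try congruence.

Lemma swap_atom_r a b : swap_atom (a, b) b = a.
Proof. unfold swap_atom; simpl; case_atom_eqb. Qed.

Lemma swap_atom_other a b c : c <> a -> c <> b -> swap_atom (a, b) c = c.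
Proof. unfold swap_atom; simpl; case_atom_eqb. Qed.

Lemma swap_atom_involutive s c : swap_atom s (swap_atom s c) = c.
Proof. destruct s as [a b]; unfold swap_atom; simpl; case_atom_eqb. Qed.

Lemma perm_app_app p q c : perm_app (p ++ q) c = perm_app p (perm_app q c).
Proof. apply fold_right_app. Qed.

Lemma perm_app_single a b c : perm_app [(a, b)] c = swap_atom (a, b) c.
Proof. reflexivity. Qed.

Lemma perm_app_inv_l p c : perm_app (perm_inv p) (perm_app p c) = c.
Proof.
  induction p as [|s p IH]; simpl; auto.
  unfold perm_inv; simpl; rewrite perm_app_app; simpl.
  rewrite swap_atom_involutive; apply IH.
Qed.

Lemma perm_app_inv_r p c : perm_app p (perm_app (perm_inv p) c) = c.
Proof. rewrite <- (rev_involutive p) at 1; apply perm_app_inv_l. Qed.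

Lemma perm_app_inj p c d : perm_app p c = perm_app p d -> c = d.
Proof.
  intros E; rewrite <- (perm_app_inv_l p c), <- (perm_app_inv_l p d), E; reflexivity.
Qed.

Lemma atom_eqb_perm_app p c d : atom_eqb (perm_app p c) (perm_app p d) = atom_eqb c d.
Proof.
  destruct (atom_eqb_spec c d), (atom_eqb_spec (perm_app p c) (perm_app p d));
    subst; try congruence.
  apply perm_app_inj in e; contradiction.
Qed.

Lemma perm_app_swap p a b c :
  perm_app p (swap_atom (a, b) c) =
  swap_atom (perm_app p a, perm_app p b) (perm_app p c).
Proof.
  unfold swap_atom; simpl; rewrite !atom_eqb_perm_app.
  destruct (atom_eqb c a), (atom_eqb c b); reflexivity.
Qed.

Lemma asort_perm_app p c : wf_perm p -> asort (perm_app p c) = asort c.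
Proof.
  intros W; induction p as [|[a b] p IH]; simpl; auto.
  assert (Hab : asort a = asort b) by (apply (W (a, b)); simpl; auto).
  rewrite <- IH by (intros s Hs; apply W; simpl; auto).
  unfold swap_atom; simpl; case_atom_eqb.
Qed.

Lemma wf_perm_nil : wf_perm nil.
Proof. intros s []. Qed.

Lemma wf_perm_app p q : wf_perm p -> wf_perm q -> wf_perm (p ++ q).
Proof. intros Hp Hq s Hs; apply in_app_or in Hs as [Hs|Hs]; auto. Qed.

Lemma wf_perm_swap a b : asort a = asort b -> wf_perm [(a, b)].
Proof. intros H s [<-|[]]; exact H. Qed.

Definition perm_ext (p q : perm) : Prop := forall c, perm_app p c = perm_app q c.

Lemma perm_ext_inv p q : perm_ext p q -> perm_ext (perm_inv p) (perm_inv q).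
Proof.
  intros E c; apply (perm_app_inj q).
  rewrite perm_app_inv_r, <- E, perm_app_inv_r; reflexivity.
Qed.

Lemma perm_app_inv_iff p c d : perm_app (perm_inv p) c = d <-> c = perm_app p d.
Proof. split; [intros <-; now rewrite perm_app_inv_r | intros ->; apply perm_app_inv_l]. Qed.

(** * Freshness and alpha-equivalence *)

Fixpoint term_nested_ind (P : term -> Prop)
  (HAtm : forall a, P (Atm a))
  (HAbs : forall a t, P t -> P (Abs a t))
  (HFn : forall f ts, Forall P ts -> P (Fn f ts))
  (HSusp : forall p X, P (Susp p X)) (t : term) : P t :=
  match t with
  | Atm a => HAtm a
  | Abs a u => HAbs a u (term_nested_ind P HAtm HAbs HFn HSusp u)
  | Fn f ts => HFn f ts ((fix go (l : list term) : Forall P l :=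
       match l with
       | nil => Forall_nil P
       | u :: us => Forall_cons u (term_nested_ind P HAtm HAbs HFn HSusp u) (go us)
       end) ts)
  | Susp p X => HSusp p X
  end.

Lemma perm_act_app p q t : perm_act p (perm_act q t) = perm_act (p ++ q) t.
Proof.
  induction t as [a|a t IH|f ts IH|r X] using term_nested_ind; simpl.
  - now rewrite perm_app_app.
  - now rewrite perm_app_app, IH.
  - rewrite map_map; f_equal; apply map_ext_Forall, IH.
  - now rewrite app_assoc.
Qed.

Lemma perm_act_nil t : perm_act nil t = t.
Proof.
  induction t as [a|a t IH|f ts IH|r X] using term_nested_ind; simpl; auto.
  - now rewrite IH.
  - f_equal; transitivity (map (fun u => u) ts); [apply map_ext_Forall, IH | apply map_id].
Qed.

Lemma fresh_Atm_iff G c a : fresh G c (Atm a) <-> c <> a.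
Proof. split; [intros F; now inversion F | apply fr_atm]. Qed.

Lemma fresh_Abs_iff G c a t : fresh G c (Abs a t) <-> c = a \/ fresh G c t.
Proof.
  split.
  - intros F; inversion F; auto.
  - destruct (atom_dec c a) as [->|Hca]; [constructor|].
    intros [E|F]; [contradiction | now apply fr_abs_neq].
Qed.

Lemma fresh_abs_inv G c a t : fresh G c (Abs a t) -> c <> a -> fresh G c t.
Proof. rewrite fresh_Abs_iff; intros [E|F] Hca; [contradiction | exact F]. Qed.

Lemma fresh_Fn_iff G c f ts : fresh G c (Fn f ts) <-> Forall (fresh G c) ts.
Proof. rewrite Forall_forall; split; [intros F; now inversion F | apply fr_fn]. Qed.

Lemma fresh_Susp_iff G c p X :
  fresh G c (Susp p X) <-> In (perm_app (perm_inv p) c, X) G.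
Proof. split; [intros F; now inversion F | apply fr_susp]. Qed.

Lemma fresh_perm_act G p c t :
  fresh G c (perm_act p t) <-> fresh G (perm_app (perm_inv p) c) t.
Proof.
  revert c; induction t as [a|a t IH|f ts IH|q X] using term_nested_ind; intros c; simpl.
  - rewrite !fresh_Atm_iff, perm_app_inv_iff; reflexivity.
  - rewrite !fresh_Abs_iff, IH, perm_app_inv_iff; reflexivity.
  - rewrite !fresh_Fn_iff, Forall_map, !Forall_forall; rewrite Forall_forall in IH.
    split; intros F u Hu; apply (IH u Hu), F, Hu.
  - rewrite !fresh_Susp_iff; unfold perm_inv; rewrite rev_app_distr, perm_app_app.
    reflexivity.
Qed.

Lemma fresh_swap G a b c t :
  fresh G c (perm_act [(a, b)] t) <-> fresh G (swap_atom (a, b) c) t.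
Proof. apply fresh_perm_act. Qed.

Lemma fresh_perm_ext G p q c t :
  perm_ext p q -> fresh G c (perm_act p t) -> fresh G c (perm_act q t).
Proof. intros E; rewrite !fresh_perm_act, (perm_ext_inv p q E c); auto. Qed.

Lemma aeq_perm_ext G y : forall x r r', perm_ext r r' ->
  aeq G x (perm_act r y) -> aeq G x (perm_act r' y).
Proof.
  induction y as [b|b y IH|f ys IH|q X] using term_nested_ind; intros x r r' E Ha;
    simpl in *; inversion Ha as [|? x' ? Hx|a x' ? ? Hne Hs Hx Fa|p ? ? Hp|? xs ? Hxs]; subst.
  - rewrite E; constructor.
  - rewrite E; constructor; eapply IH; eauto.
  - rewrite <- (E b); apply aeq_abs_neq; [exact Hne | exact Hs | |].
    + rewrite perm_act_app in *; eapply IH; [|exact Hx].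
      intros c; rewrite !perm_app_app, (E c); reflexivity.
    + eapply fresh_perm_ext; eauto.
  - constructor; rewrite Forall2_map_r in *.
    eapply Forall2_Forall_impl_r; [|exact IH|exact Hxs]; simpl; eauto.
  - constructor; intros c Hc; apply Hp.
    rewrite perm_app_app, E, <- perm_app_app; exact Hc.
Qed.

Lemma aeq_perm_act G p t : forall u, wf_perm p ->
  aeq G t u -> aeq G (perm_act p t) (perm_act p u).
Proof.
  induction t as [a|a t IH|f ts IH|q X] using term_nested_ind; intros u W Ha;
    inversion Ha as [|? ? t' Ht|? a' ? t' Hne Hs Ht Ft|? q' ? Hq|? ? ts' Hts]; subst; simpl.
  - constructor.
  - constructor; auto.
  - apply aeq_abs_neq.
    + intros E; apply perm_app_inj in E; contradiction.
    + rewrite !asort_perm_app; auto.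
    + rewrite perm_act_app; apply aeq_perm_ext with (r := p ++ [(a, a')]).
      * intros c; rewrite !perm_app_app; apply perm_app_swap.
      * rewrite <- perm_act_app; apply IH; auto.
    + apply fresh_perm_act; rewrite perm_app_inv_l; exact Ft.
  - constructor; rewrite Forall2_map_l, Forall2_map_r.
    eapply Forall2_Forall_impl_l; [|exact IH|exact Hts]; simpl; auto.
  - constructor; intros c Hc; apply Hq.
    intros E; apply Hc; rewrite !perm_app_app, E; reflexivity.
Qed.

Lemma aeq_disagreement G t : forall p p', wf_perm p -> wf_perm p' ->
  (forall c, perm_app p c <> perm_app p' c -> fresh G c t) ->
  aeq G (perm_act p t) (perm_act p' t).
Proof.
  induction t as [a|a t IH|f ts IH|q X] using term_nested_ind; intros p p' W W' D; simpl.
  - destruct (atom_dec (perm_app p a) (perm_app p' a)) as [E|NE].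
    + rewrite E; constructor.
    + exfalso; apply (proj1 (fresh_Atm_iff G a a) (D a NE)); reflexivity.
  - destruct (atom_dec (perm_app p a) (perm_app p' a)) as [E|NE].
    + rewrite E; constructor; apply IH; auto.
      intros c Hc; apply (fresh_abs_inv G c a t (D c Hc)).
      intros ->; contradiction.
    + apply aeq_abs_neq; [exact NE | rewrite !asort_perm_app; auto | |].
      * rewrite perm_act_app; apply IH; auto.
        { apply wf_perm_app; [apply wf_perm_swap; rewrite !asort_perm_app; auto | exact W']. }
        (* [(pa p'a) p'] differs from [p] only where [p'] does, and never at [a]. *)
        intros c Hc; rewrite perm_app_app, perm_app_single in Hc.
        assert (Hca : c <> a) by (intros ->; apply Hc; symmetry; apply swap_atom_r).
        apply (fresh_abs_inv G c a t); [apply D | exact Hca].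
        intros E; apply Hc; rewrite E, swap_atom_other; [reflexivity| |].
        -- rewrite <- E; intros E'; apply perm_app_inj in E'; contradiction.
        -- intros E'; apply perm_app_inj in E'; contradiction.
      * apply fresh_perm_act.
        set (d := perm_app (perm_inv p') (perm_app p a)).
        assert (Hd : perm_app p' d = perm_app p a) by apply perm_app_inv_r.
        clearbody d.
        assert (Hda : d <> a) by (intros ->; congruence).
        apply (fresh_abs_inv G d a t); [apply D | exact Hda].
        rewrite Hd; intros E; apply perm_app_inj in E; contradiction.
  - assert (Dts : Forall (fun u => forall c, perm_app p c <> perm_app p' c -> fresh G c u) ts).
    { apply Forall_forall; intros u Hu c Hc.
      specialize (D c Hc); rewrite fresh_Fn_iff, Forall_forall in D; auto. }
    constructor; rewrite Forall2_map_l, Forall2_map_r.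
    eapply Forall2_diag; [|apply Forall_and; [exact IH | exact Dts]].
    intros u [IHu Du]; auto.
  - constructor; intros c Hc; rewrite !perm_app_app in Hc.
    specialize (D _ Hc); rewrite fresh_Susp_iff, perm_app_inv_l in D; exact D.
Qed.

Lemma aeq_refl G t : aeq G t t.
Proof.
  rewrite <- (perm_act_nil t); apply aeq_disagreement; try apply wf_perm_nil.
  intros c Hc; contradiction Hc; reflexivity.
Qed.

Lemma fresh_aeq G t : forall c u, fresh G c t -> aeq G t u -> fresh G c u.
Proof.
  induction t as [a|a t IH|f ts IH|p X] using term_nested_ind; intros c u F Ha;
    inversion Ha as [|? ? t' Ht|? a' ? t' Hne Hs Ht Ft|? p' ? Hp|? ? ts' Hts]; subst.
  - exact F.
  - rewrite fresh_Abs_iff in *; destruct F as [->|F]; eauto.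
  - apply fresh_Abs_iff.
    destruct (atom_dec c a') as [->|Hca']; [now left | right].
    destruct (atom_dec c a) as [->|Hca]; [exact Ft|].
    assert (F' : fresh G c (perm_act [(a, a')] t')) by (eapply IH, Ht; eapply fresh_abs_inv; eauto).
    rewrite fresh_swap, swap_atom_other in F'; auto.
  - rewrite fresh_Fn_iff in *.
    eapply Forall2_Forall_transport; [|apply Forall_and; [exact IH | exact F]|exact Hts].
    intros x y [IHx Fx] Hxy; eauto.
  - rewrite fresh_Susp_iff in *.
    destruct (atom_dec (perm_app (perm_inv p) c) (perm_app (perm_inv p') c)) as [E|NE].
    + rewrite <- E; exact F.
    + apply Hp; rewrite perm_app_inv_r; intros E; apply NE.
      rewrite <- E at 1; apply perm_app_inv_l.
Qed.

Lemma aeq_swap_swap G a b c t :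
  asort a = asort b -> asort b = asort c -> fresh G a t -> fresh G b t ->
  aeq G (perm_act [(a, b); (b, c)] t) (perm_act [(a, c)] t).
Proof.
  intros Hab Hbc Fa Fb; apply aeq_disagreement.
  - intros s [<-|[<-|[]]]; assumption.
  - apply wf_perm_swap; congruence.
  - (* [(a b)(b c)] and [(a c)] agree outside [{a, b}]. *)
    intros d Hd.
    destruct (atom_dec d a) as [->|Hda]; [exact Fa|].
    destruct (atom_dec d b) as [->|Hdb]; [exact Fb|].
    exfalso; apply Hd; simpl; unfold swap_atom; simpl; case_atom_eqb.
Qed.

Lemma aeq_trans G x : forall y z, aeq G x y -> aeq G y z -> aeq G x z.
Proof.
  induction x as [a|a x IH|f xs IH|p X] using term_nested_ind; intros y z Hxy Hyz;
    inversion Hxy as [|? ? y' Hy|? b ? y' Hab Sab Hy Fa|? q ? Hq|? ? ys Hys]; subst;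
    inversion Hyz as [|? ? z' Hz|? c ? z' Hbc Sbc Hz Fb|? r ? Hr|? ? zs Hzs]; subst.
  - constructor.
  - constructor; eauto.
  - apply aeq_abs_neq; eauto.
  - apply aeq_abs_neq; auto.
    + eapply IH; [exact Hy|]; apply aeq_perm_act; [apply wf_perm_swap, Sab | exact Hz].
    + eapply fresh_aeq; eauto.
  - assert (E1 : aeq G x (perm_act [(a, b); (b, c)] z')).
    { eapply IH; [exact Hy|].
      change [(a, b); (b, c)] with ([(a, b)] ++ [(b, c)]); rewrite <- perm_act_app.
      apply aeq_perm_act; [apply wf_perm_swap, Sab | exact Hz]. }
    destruct (atom_dec a c) as [->|Hac].
    + constructor; eapply IH; [exact E1|].
      rewrite <- (perm_act_nil z') at 2; apply aeq_disagreement.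
      * intros s [<-|[<-|[]]]; simpl; congruence.
      * apply wf_perm_nil.
      * intros d Hd; exfalso; apply Hd; simpl; unfold swap_atom; simpl; case_atom_eqb.
    + assert (Fa' : fresh G a z').
      { assert (F : fresh G a (perm_act [(b, c)] z')) by (eapply fresh_aeq; eauto).
        rewrite fresh_swap, swap_atom_other in F; auto. }
      apply aeq_abs_neq; [exact Hac | congruence | | exact Fa'].
      eapply IH; [exact E1 | apply aeq_swap_swap; auto].
  - constructor; eapply Forall2_Forall_trans; [|exact IH|exact Hys|exact Hzs]; eauto.
  - constructor; intros d Hd.
    destruct (atom_dec (perm_app p d) (perm_app q d)) as [E|NE].
    + apply Hr; congruence.
    + apply Hq, NE.
Qed.

Lemma aeq_sym G t : forall u, aeq G t u -> aeq G u t.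
Proof.
  induction t as [a|a t IH|f ts IH|p X] using term_nested_ind; intros u Ha;
    inversion Ha as [|? ? t' Ht|? a' ? t' Hne Hs Ht Ft|? p' ? Hp|? ? ts' Hts]; subst.
  - constructor.
  - constructor; auto.
  - assert (Hsym : aeq G (perm_act [(a, a')] t') t) by auto.
    apply aeq_abs_neq; [congruence | congruence | |].
    + apply aeq_trans with (perm_act [(a', a); (a, a')] t').
      * rewrite <- (perm_act_nil t') at 1; apply aeq_disagreement.
        -- apply wf_perm_nil.
        -- intros s [<-|[<-|[]]]; simpl; congruence.
        -- intros d Hd; exfalso; apply Hd; simpl; unfold swap_atom; simpl; case_atom_eqb.
      * change [(a', a); (a, a')] with ([(a', a)] ++ [(a, a')]); rewrite <- perm_act_app.
        apply aeq_perm_act; [apply wf_perm_swap; congruence | exact Hsym].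
    + apply (fresh_aeq G (perm_act [(a, a')] t')); [|exact Hsym].
      apply fresh_swap; rewrite swap_atom_r; exact Ft.
  - constructor; apply Forall2_flip in Hts.
    eapply Forall2_Forall_impl_r; [|exact IH|exact Hts]; simpl; auto.
  - constructor; intros c Hc; apply Hp; intros E; apply Hc; symmetry; exact E.
Qed.

(** * The algorithm FC *)

Fixpoint opt_concat {T V : Type} (g : T -> option (list V)) (l : list T) : option (list V) :=
  match l with
  | nil => Some nil
  | u :: l' =>
      match g u, opt_concat g l' with
      | Some D1, Some D2 => Some (D1 ++ D2)
      | _, _ => None
      end
  end.

Lemma opt_concat_incl_iff {T V : Type} (g : T -> option (list V)) l G :
  (exists D, opt_concat g l = Some D /\ incl D G) <->
  Forall (fun u => exists D, g u = Some D /\ incl D G) l.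
Proof.
  induction l as [|u l IH]; simpl.
  - split; [constructor | intros _; exists nil; split; [reflexivity | apply incl_nil_l]].
  - rewrite Forall_cons_iff, <- IH.
    destruct (g u) as [D1|], (opt_concat g l) as [D2|]; split;
      try (intros (D & E & _); discriminate);
      try (intros [(D & E & _) (D' & E' & _)]; discriminate).
    + intros (D & [= <-] & I); apply incl_app_inv in I as [I1 I2]; split; eauto.
    + intros [(D1' & [= <-] & I1) (D2' & [= <-] & I2)].
      exists (D1 ++ D2); split; [reflexivity | apply incl_app; assumption].
Qed.

Lemma fc_Fn a f ts : fc a (Fn f ts) = opt_concat (fc a) ts.
Proof. induction ts as [|u ts IH]; simpl in *; [reflexivity | now rewrite IH]. Qed.

Lemma nabla_sub_opt_concat N sg :
  nabla_sub N sg = opt_concat (fun c => fc (fst c) (vsub sg (snd c))) N.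
Proof. induction N as [|[a X] N IH]; simpl; [reflexivity | now rewrite IH]. Qed.

Lemma fc_incl_iff_fresh G a u : (exists D, fc a u = Some D /\ incl D G) <-> fresh G a u.
Proof.
  induction u as [b|b u IH|f ts IH|p X] using term_nested_ind.
  - rewrite fresh_Atm_iff; simpl; destruct (atom_eqb_spec a b) as [->|Hab].
    + split; [intros (D & E & _); discriminate | intros H; contradiction H; reflexivity].
    + split; [intros _; exact Hab | intros _; exists nil; split; [reflexivity | apply incl_nil_l]].
  - rewrite fresh_Abs_iff; simpl; destruct (atom_eqb_spec a b) as [->|Hab].
    + split; [intros _; now left | intros _; exists nil; split; [reflexivity | apply incl_nil_l]].
    + rewrite IH; split; [now right | intros [E|F]; [contradiction | exact F]].
  - rewrite fc_Fn, fresh_Fn_iff; etransitivity; [apply opt_concat_incl_iff|].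
    rewrite !Forall_forall; rewrite Forall_forall in IH; split; intros H v Hv; apply (IH v Hv), H, Hv.
  - rewrite fresh_Susp_iff; simpl; split.
    + intros (D & [= <-] & I); apply I; left; reflexivity.
    + intros H; eexists; split; [reflexivity | intros x [<-|[]]; exact H].
Qed.

Lemma nabla_sub_incl_iff_fresh G N sg :
  (exists D, nabla_sub N sg = Some D /\ incl D G) <->
  (forall a X, In (a, X) N -> fresh G a (vsub sg X)).
Proof.
  rewrite nabla_sub_opt_concat; etransitivity; [apply opt_concat_incl_iff|].
  rewrite Forall_forall; split; intros H.
  - intros a X HaX; apply fc_incl_iff_fresh, (H (a, X) HaX).
  - intros [a X] HaX; apply fc_incl_iff_fresh, H, HaX.
Qed.

Lemma occurs_free_unsusp_fresh G a u : fresh G a u -> occurs_free_unsusp a u = false.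
Proof.
  induction u as [b|b u IH|f ts IH|p X] using term_nested_ind; simpl; intros F.
  - rewrite fresh_Atm_iff in F; destruct (atom_eqb_spec a b); [contradiction | reflexivity].
  - rewrite fresh_Abs_iff in F; destruct (atom_eqb_spec a b) as [->|Hab]; [reflexivity|].
    destruct F as [E|F]; [contradiction | auto].
  - rewrite fresh_Fn_iff, Forall_forall in F; rewrite Forall_forall in IH.
    destruct (existsb (occurs_free_unsusp a) ts) eqn:E; [|reflexivity].
    apply existsb_exists in E as (v & Hv & Ev).
    rewrite (IH v Hv (F v Hv)) in Ev; discriminate.
  - reflexivity.
Qed.

Lemma tic_le_iff_fresh sig N t G s :
  tic_le sig (N, t) (G, s) <->
  exists sg, wf_subst sig sg /\
    (forall a X, In (a, X) N -> fresh G a (vsub sg X)) /\ aeq G (subst sg t) s.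
Proof.
  unfold tic_le; simpl; split.
  - intros (sg & W & _ & HD & A); exists sg.
    split; [exact W | split; [now apply nabla_sub_incl_iff_fresh | exact A]].
  - intros (sg & W & F & A); exists sg; split; [exact W|].
    split; [|split; [now apply nabla_sub_incl_iff_fresh | exact A]].
    intros a X H; eapply occurs_free_unsusp_fresh, F, H.
Qed.

(** * Substitutions and joinability *)

Lemma has_sort_perm_act sig p t s :
  wf_perm p -> has_sort sig t s -> has_sort sig (perm_act p t) s.
Proof.
  intros W Ht; revert s Ht; induction t as [a|a t IH|f ts IH|q X] using term_nested_ind;
    intros s Ht; inversion Ht as [|? ? s' Hs|? ? Hts|? ? Wq]; subst; simpl.
  - rewrite <- (asort_perm_app p a W); constructor.
  - rewrite <- (asort_perm_app p a W); constructor; auto.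
  - constructor; rewrite Forall2_map_l.
    eapply Forall2_Forall_impl_l; [|exact IH|exact Hts]; simpl; auto.
  - constructor; apply wf_perm_app; assumption.
Qed.

Lemma has_sort_subst sig sg t s :
  wf_subst sig sg -> has_sort sig t s -> has_sort sig (subst sg t) s.
Proof.
  intros W Ht; revert s Ht; induction t as [a|a t IH|f ts IH|q X] using term_nested_ind;
    intros s Ht; inversion Ht as [|? ? s' Hs|? ? Hts|? ? Wq]; subst; simpl.
  - constructor.
  - constructor; auto.
  - constructor; rewrite Forall2_map_l.
    eapply Forall2_Forall_impl_l; [|exact IH|exact Hts]; simpl; auto.
  - apply has_sort_perm_act; [exact Wq | apply W].
Qed.

Lemma subst_ext_in_vars sg sg' t :
  (forall X, In X (vars t) -> sg X = sg' X) -> subst sg t = subst sg' t.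
Proof.
  induction t as [a|a t IH|f ts IH|p X] using term_nested_ind; simpl; intros E.
  - reflexivity.
  - now rewrite IH.
  - f_equal; apply map_ext_in; intros u Hu; rewrite Forall_forall in IH.
    apply IH; [exact Hu|]; intros X HX; apply E, in_flat_map; eauto.
  - rewrite E; [reflexivity | left; reflexivity].
Qed.

Definition var_dec (X Y : var) : {X = Y} + {X <> Y}.
Proof. repeat decide equality. Defined.

Definition subst_union (V : list var) (sg1 sg2 : subst_t) : subst_t :=
  fun X => if in_dec var_dec X V then sg1 X else sg2 X.

Lemma wf_subst_union sig V sg1 sg2 :
  wf_subst sig sg1 -> wf_subst sig sg2 -> wf_subst sig (subst_union V sg1 sg2).
Proof. intros W1 W2 X; unfold subst_union; destruct (in_dec var_dec X V); auto. Qed.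

Lemma subst_union_agree_l V sg1 sg2 t :
  incl (vars t) V -> subst (subst_union V sg1 sg2) t = subst sg1 t.
Proof.
  intros HV; apply subst_ext_in_vars; intros X HX; unfold subst_union.
  destruct (in_dec var_dec X V) as [_|NV]; [reflexivity | contradiction (NV (HV X HX))].
Qed.

Lemma subst_union_agree_r V sg1 sg2 t :
  (forall X, In X (vars t) -> ~ In X V) -> subst (subst_union V sg1 sg2) t = subst sg2 t.
Proof.
  intros HV; apply subst_ext_in_vars; intros X HX; unfold subst_union.
  destruct (in_dec var_dec X V) as [IV|_]; [contradiction (HV X HX IV) | reflexivity].
Qed.

Lemma in_vars_tic_term N t X : In X (vars t) -> In X (vars_tic (N, t)).
Proof. intros H; apply in_or_app; left; exact H. Qed.

Lemma in_vars_tic_ctx N t a X : In (a, X) N -> In X (vars_tic (N, t)).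
Proof. intros H; apply in_or_app; right; exact (in_map snd N (a, X) H). Qed.

Theorem lemma2 (sig : signature) (N1 N2 : fctx) (t1 t2 : term) (s1 s2 : sort)
  (Ht1 : has_sort sig t1 s1) (Ht2 : has_sort sig t2 s2)
  (Hdisj : forall X, In X (vars_tic (N1, t1)) -> ~ In X (vars_tic (N2, t2))) :
  (exists (G : fctx) (s : term),
      (exists so, has_sort sig s so) /\
      tic_le sig (N1, t1) (G, s) /\ tic_le sig (N2, t2) (G, s))
  <->
  (exists (G : fctx) (sg : subst_t),
      wf_subst sig sg /\
      aeq G (subst sg t1) (subst sg t2) /\
      (forall a X, In (a, X) (N1 ++ N2) -> fresh G a (vsub sg X))).
Proof.
  split.
  - intros (G & s & _ & le1 & le2).
    apply tic_le_iff_fresh in le1 as (sg1 & W1 & F1 & A1).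
    apply tic_le_iff_fresh in le2 as (sg2 & W2 & F2 & A2).
    set (V := vars_tic (N1, t1)).
    assert (HV : forall X, In X (vars_tic (N2, t2)) -> ~ In X V) by firstorder.
    exists G, (subst_union V sg1 sg2); split; [|split].
    + now apply wf_subst_union.
    + rewrite subst_union_agree_l, subst_union_agree_r.
      * eapply aeq_trans; [exact A1 | now apply aeq_sym].
      * intros X HX; apply HV, in_vars_tic_term, HX.
      * intros X HX; apply in_vars_tic_term, HX.
    + intros a X HaX; unfold vsub; apply in_app_or in HaX as [H|H].
      * rewrite subst_union_agree_l; [apply F1, H | intros Y [<-|[]]].
        eapply in_vars_tic_ctx, H.
      * rewrite subst_union_agree_r; [apply F2, H | intros Y [<-|[]]].
        eapply HV, in_vars_tic_ctx, H.
  - intros (G & sg & W & A & F).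
    exists G, (subst sg t2); split; [exists s2; now apply has_sort_subst|].
    split; apply tic_le_iff_fresh; exists sg; repeat split; auto using aeq_refl;
      intros a X H; apply F, in_or_app; auto.
Qed.
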